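(* Let $g(x)$ and $a(x)$ be coprime real univariate polynomials with $\deg(g)=m$. If $a(x)>0$ for all $x\in\{x\in\mathbb{R}\mid g(x)=0\}$, then there exists a polynomial $t\in\mathbb{R}[x]_m$ such that $a\equiv t^2\pmod g$.
   Context: $\mathbb{R}[x]_m$ is the space of real univariate polynomials of degree at most $m$. For univariate polynomials, $a\equiv b\pmod g$ means $a=b+wg$ for some $w\in\mathbb{R}[x]$. Coprime means the greatest common divisor is a constant. *)

From mathcomp Require Import all_boot all_order all_algebra.
From mathcomp Require Export Rstruct.
From Stdlib Require Export Reals.

From mathcomp Require Import all_boot all_order all_algebra.
From mathcomp Require Import Rstruct.
From mathcomp Require Import complex ring lra zify.
Import Order.TTheory GRing.Theory Num.Theory.
Set Implicit Arguments.
Unset Strict Implicit.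
Local Open Scope ring_scope.

(* Peel off the real irreducible factors of g one complex root z at a time.
   Modulo the factor of z, a square root of a exists: a constant sqrt(a(z)) if
   z is real (this is where positivity is used), and otherwise the real linear
   polynomial taking the value sqrt(a(z)) at z.  Square roots modulo coprime
   moduli are glued by the Chinese remainder theorem, and a repeated factor is
   handled by Hensel lifting from g to g^2, which needs a coprime to g.
   Finally t is reduced modulo g to get deg t < m. *)

Section SquareRootsModulo.
Variable F : fieldType.
Implicit Types a g t : {poly F}.

Lemma dvdp_sub_sqr g a s t :
  g %| t - s -> g %| a - s ^+ 2 -> g %| a - t ^+ 2.
Proof.
move=> gts gas; have -> : a - t ^+ 2 = (a - s ^+ 2) - (t - s) * (t + s) by ring.
by rewrite dvdp_sub // dvdp_mulr.
Qed.

Lemma chinese_remainder_poly g1 g2 t1 t2 : coprimep g1 g2 ->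
  exists t, (g1 %| t - t1) && (g2 %| t - t2).
Proof.
move=> /Bezout_eq1_coprimepP [[u v] /= Huv].
exists (t1 * (v * g2) + t2 * (u * g1)); apply/andP; split.
- have -> : t1 * (v * g2) + t2 * (u * g1) - t1
            = g1 * (u * (t2 - t1)) + t1 * (u * g1 + v * g2 - 1) by ring.
  by rewrite Huv subrr mulr0 addr0 dvdp_mulIl.
- have -> : t1 * (v * g2) + t2 * (u * g1) - t2
            = g2 * (v * (t1 - t2)) + t2 * (u * g1 + v * g2 - 1) by ring.
  by rewrite Huv subrr mulr0 addr0 dvdp_mulIl.
Qed.

Lemma sqr_mod_coprime_mul a g1 g2 t1 t2 : coprimep g1 g2 ->
  g1 %| a - t1 ^+ 2 -> g2 %| a - t2 ^+ 2 -> exists t, g1 * g2 %| a - t ^+ 2.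
Proof.
move=> g12 at1 at2; have [t /andP [tt1 tt2]] := chinese_remainder_poly t1 t2 g12.
by exists t; rewrite Gauss_dvdp // (dvdp_sub_sqr tt1) // (dvdp_sub_sqr tt2).
Qed.

(* Newton step t = t1 + s g with 2 t1 s = e (u t1^2), where a - t1^2 = e g and
   u is the inverse of a (hence of t1^2) modulo g. *)
Lemma sqr_mod_lift a g t1 : (2%:R : F) != 0 -> coprimep a g ->
  g %| a - t1 ^+ 2 -> exists t, g ^+ 2 %| a - t ^+ 2.
Proof.
move=> two_neq0 /Bezout_eq1_coprimepP [[u v] /= Huv] /dvdpP [e He].
set s := (2%:R : F)^-1%:P * e * u * t1.
have aE : a = t1 ^+ 2 + e * g by rewrite -He; ring.
have two_t1_s : 2%:R * t1 * s = e * (u * t1 ^+ 2).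
  have -> : 2%:R * t1 * s = ((2%:R : F) * 2%:R^-1)%:P * e * (u * t1 ^+ 2).
    by rewrite /s polyCM polyC_natr; ring.
  by rewrite mulfV // mul1r.
have u_t1 : u * t1 ^+ 2 = 1 - (v + u * e) * g.
  by rewrite -Huv aE; ring.
exists (t1 + s * g); apply/dvdpP; exists (e * (v + u * e) - s ^+ 2).
have -> : a - (t1 + s * g) ^+ 2 = e * g - (2%:R * t1 * s) * g - s ^+ 2 * g ^+ 2.
  by rewrite aE; ring.
by rewrite two_t1_s u_t1; ring.
Qed.

End SquareRootsModulo.

Local Notation toC := (real_complex R).
Local Notation "f ^C" := (map_poly toC f) (at level 1, format "f ^C").

Definition real_minpoly (z : R[i]) : {poly R} :=
  if complex.Im z == 0 then 'X - (complex.Re z)%:P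
  else 'X ^+ 2 - (2%:R * complex.Re z)%:P * 'X
       + (complex.Re z ^+ 2 + complex.Im z ^+ 2)%:P.

Lemma map_real_minpoly z : (real_minpoly z)^C =
  if complex.Im z == 0 then 'X - z%:P else ('X - z%:P) * ('X - (z^*)%C%:P).
Proof.
rewrite /real_minpoly; case: z => x y /=; case: eqP => [->|_].
  by rewrite rmorphB /= map_polyX map_polyC.
rewrite rmorphD rmorphB !rmorphM /= !map_polyX !map_polyC /= -expr2.
have -> : ('X - (x +i* y)%C%:P) * ('X - (x -i* y)%C%:P) =
  'X ^+ 2 - ((x +i* y)%C + (x -i* y)%C)%:P * 'X + ((x +i* y)%C * (x -i* y)%C)%:P.
  rewrite polyCD polyCM; ring.
rewrite -polyCM; congr (_ - _%:P * _ + _%:P).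
  by rewrite -rmorphM /=; simpc; congr (Complex _ _); ring.
by simpc; congr (Complex _ _); ring.
Qed.

Lemma root_map_conjc (f : {poly R}) z : root f^C (z^*)%C = root f^C z.
Proof.
rewrite -complex_root_conj -map_poly_comp; congr (root _ _).
by apply: eq_map_poly => x /=; rewrite oppr0.
Qed.

Lemma conjc_neq (z : R[i]) : complex.Im z != 0 -> (z^*)%C != z.
Proof.
case: z => x y /= y_neq0; rewrite eq_complex /= eqxx /=.
by apply: contra y_neq0 => /eqP yE; apply/eqP; lra.
Qed.

Lemma real_minpoly_dvdp (f : {poly R}) z : root f^C z -> real_minpoly z %| f.
Proof.
move=> fz; rewrite -(dvdp_map toC) map_real_minpoly; case: ifP => Im_z.
  by rewrite dvdp_XsubCl.
rewrite Gauss_dvdp; last by rewrite coprimep_XsubC root_XsubC conjc_neq ?Im_z.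
by rewrite !dvdp_XsubCl fz root_map_conjc fz.
Qed.

Lemma coprimep_real_minpoly (f : {poly R}) z :
  ~~ root f^C z -> coprimep f (real_minpoly z).
Proof.
move=> fz; rewrite -(coprimep_map toC) map_real_minpoly; case: ifP => _.
  by rewrite coprimep_XsubC.
by rewrite coprimepMr !coprimep_XsubC root_map_conjc fz.
Qed.

Lemma size_real_minpoly z : (1 < size (real_minpoly z))%N.
Proof.
rewrite -(size_map_poly toC) map_real_minpoly; case: ifP => _.
  by rewrite size_XsubC.
by rewrite size_mul ?polyXsubC_eq0 // !size_XsubC.
Qed.

Lemma real_affine_span (z w : R[i]) : complex.Im z != 0 ->
  exists u v : R, toC u * z + toC v = w.
Proof.
case: z => x y; case: w => p q /= y_neq0.
exists (q / y), (p - q / y * x); simpc; congr (Complex _ _).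
  by ring.
by field.
Qed.

Lemma sqr_mod_real_minpoly (a : {poly R}) z :
  (complex.Im z = 0 -> 0 <= a.[complex.Re z]) ->
  exists t, real_minpoly z %| a - t ^+ 2.
Proof.
case: (eqVneq (complex.Im z) 0) => [Im_z /(_ Im_z) a_ge0 | Im_z _].
  exists (Num.sqrt a.[complex.Re z])%:P.
  by rewrite /real_minpoly Im_z eqxx dvdp_XsubCl /root !hornerE sqr_sqrtr ?subrr.
have [u [v uvE]] := real_affine_span (sqrtc a^C.[z]) Im_z.
exists (u%:P * 'X + v%:P); apply: real_minpoly_dvdp.
rewrite /root rmorphB rmorphXn rmorphD rmorphM /= map_polyX !map_polyC.
by rewrite hornerD hornerN horner_exp !hornerE /= uvE sqr_sqrtc subrr.
Qed.

Lemma root_map_real (f : {poly R}) z :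
  root f^C z -> complex.Im z = 0 -> root f (complex.Re z).
Proof.
case: z => x y /= fz y0; move: fz; rewrite y0 complexr0.
by rewrite /root horner_map fmorph_eq0.
Qed.

Lemma sqr_mod_mul_real_minpoly (a g t1 : {poly R}) z :
  coprimep a g -> g %| a - t1 ^+ 2 ->
  (complex.Im z = 0 -> 0 <= a.[complex.Re z]) ->
  exists t, g * real_minpoly z %| a - t ^+ 2.
Proof.
move=> a_g g_at1 a_z; case: (boolP (root g^C z)) => gz.
  have two_neq0 : (2%:R : R) != 0 by rewrite pnatr_eq0.
  have [t g2_at] := sqr_mod_lift two_neq0 a_g g_at1.
  by exists t; apply: dvdp_trans g2_at; rewrite expr2 dvdp_mul ?real_minpoly_dvdp.
have [t0 t0P] := sqr_mod_real_minpoly a_z.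
exact: sqr_mod_coprime_mul (coprimep_real_minpoly gz) g_at1 t0P.
Qed.

Lemma sqr_mod_exists (a g : {poly R}) : g != 0 -> coprimep g a ->
  (forall x, root g x -> 0 < a.[x]) -> exists t, g %| a - t ^+ 2.
Proof.
move: {2}(size g) (leqnn (size g)) => n; elim: n g => [|n IH] g size_g g_neq0.
  by move: size_g; rewrite leqn0 size_poly_eq0 (negbTE g_neq0).
move=> g_a g_pos; case: (leqP (size g) 1) => [size_g_le1 | size_g_gt1].
  have /eqp_dvdl g_unit : g %= 1.
    by rewrite -size_poly_eq1 eqn_leq size_g_le1 lt0n size_poly_eq0.
  by exists 0; rewrite g_unit dvd1p.
have [z gz] : exists z, root g^C z.
  by apply/closed_rootP; rewrite size_map_poly gtn_eqF.
have /dvdpP [g1 gE] := real_minpoly_dvdp gz.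
have g1_neq0 : g1 != 0 by apply: contra g_neq0; rewrite gE => /eqP ->; rewrite mul0r.
have size_g1 : (size g1 <= n)%N.
  have p_gt1 := size_real_minpoly z.
  have p_neq0 : real_minpoly z != 0 by rewrite -size_poly_eq0 gtn_eqF // ltnW.
  move: size_g; rewrite gE size_mul //.
  by move: (size g1) (size (real_minpoly z)) p_gt1 => k l; lia.
have g1_g : g1 %| g by rewrite gE dvdp_mulr.
have [t1 g1_at1] : exists t1, g1 %| a - t1 ^+ 2.
  apply: IH => // [|x g1x]; first exact: coprimep_dvdr g1_g g_a.
  by apply: g_pos; rewrite gE rootM g1x.
rewrite gE; apply: (sqr_mod_mul_real_minpoly _ g1_at1) => [|Im_z].
  by apply: coprimep_dvdl g1_g _; rewrite coprimep_sym.
exact/ltW/g_pos/root_map_real.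
Qed.

Theorem proposition3p8 (m : nat) (g a : {poly R}) :
  size g = m.+1 ->
  coprimep g a ->
  (forall x : R, root g x -> 0 < a.[x]) ->
  exists t : {poly R}, (size t <= m.+1)%N /\
    exists w : {poly R}, a = t ^+ 2 + w * g.
Proof.
move=> size_g g_a g_pos.
have g_neq0 : g != 0 by rewrite -size_poly_eq0 size_g.
have [t g_at] := sqr_mod_exists g_neq0 g_a g_pos.
have g_atmod : g %| a - (t %% g) ^+ 2.
  apply: dvdp_sub_sqr g_at.
  have -> : t %% g - t = - (t %/ g) * g by rewrite {2}(divp_eq t g); ring.
  exact: dvdp_mull.
exists (t %% g); split; first by rewrite ltnW // -size_g ltn_modp.
by exists ((a - (t %% g) ^+ 2) %/ g); rewrite divpK // addrC subrK.
Qed.
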